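(* Let $\epsilon>0$, $k\ge 1$, and let $\mathcal{R}$ be any collection of RR sets such that $|n\,\mathcal{F_R}(u)-I_u|\le\frac{\epsilon n}{4}$ for all $u\in V$. Then: (1) if $I_u\ge I^k$, then $n\,\mathcal{F_R}(u)\ge n\,\mathcal{F_R}^k-\frac{\epsilon n}{2}$; and (2) if $I_u\le I^k-\epsilon n$, then $n\,\mathcal{F_R}(u)\le n\,\mathcal{F_R}^k-\frac{\epsilon n}{2}$.
   Context: $G=\langle V,E,w\rangle$ is a network with $n=|V|\ge k$ under the Linear Threshold or Independent Cascade model; $I_u$ is the influence spread (expected number of nodes reachable from $u$ via live edges) of node $u$. $I^k$ is the $k$-th largest value among $\{I_u:u\in V\}$. For a collection $\mathcal{R}$ of RR sets, $\mathcal{F_R}(u)$ is the fraction of RR sets in $\mathcal{R}$ containing $u$, and $\mathcal{F_R}^k$ is the $k$-th largest value among $\{\mathcal{F_R}(u):u\in V\}$. *)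

From HB Require Import structures.
From mathcomp Require Import all_boot all_order all_algebra.
Set Implicit Arguments. Unset Strict Implicit. Unset Printing Implicit Defensive.
Import Order.TTheory GRing.Theory Num.Theory.
Local Open Scope ring_scope.

(* A network G = <V, E, w> is given by a finite vertex type V and a weight
   function w : V -> V -> R; the edge (x,y) is present iff w x y != 0. *)

Inductive diffusion_model := IC | LT.

Definition valid_weights (R : realFieldType) (V : finType) (m : diffusion_model)
  (w : V -> V -> R) : Prop :=
  (forall x y, 0 <= w x y <= 1) /\
  (m = LT -> forall y, \sum_(x : V) w x y <= 1).

Definition reach_count (V : finType) (L : {set V * V}) (u : V) : nat :=
  #|[set v | connect (fun x y => (x, y) \in L) u v]|.

Definition IC_prob (R : realFieldType) (V : finType) (w : V -> V -> R)
  (L : {set V * V}) : R :=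
  \prod_(e : V * V) (if e \in L then w e.1 e.2 else 1 - w e.1 e.2).

(* LT: each node y independently picks at most one incoming live edge,
   (x,y) with probability w x y, none with probability 1 - sum_x w x y. *)
Definition LT_prob (R : realFieldType) (V : finType) (w : V -> V -> R)
  (p : {ffun V -> option V}) : R :=
  \prod_(y : V) (match p y with
                 | Some x => w x y
                 | None => 1 - \sum_(x : V) w x y end).

Definition LT_graph (V : finType) (p : {ffun V -> option V}) : {set V * V} :=
  [set e : V * V | p e.2 == Some e.1].

Definition influence (R : realFieldType) (V : finType) (m : diffusion_model)
  (w : V -> V -> R) (u : V) : R :=
  match m with
  | IC => \sum_(L : {set V * V}) IC_prob w L * (reach_count L u)%:R
  | LT => \sum_(p : {ffun V -> option V}) LT_prob w p * (reach_count (LT_graph p) u)%:R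
  end.

Definition frac_cover (R : realFieldType) (V : finType) (Rs : seq {set V}) (u : V) : R :=
  (count (fun S : {set V} => u \in S) Rs)%:R / (size Rs)%:R.

(* k-th largest value (k >= 1) of f over V, counted with multiplicity. *)
Definition kth_largest (R : realFieldType) (V : finType) (f : V -> R) (k : nat) : R :=
  nth 0 (sort (fun a b : R => b <= a) (map f (enum V))) k.-1.
Arguments frac_cover {R V} Rs u.

From HB Require Import structures.
From mathcomp Require Import all_boot all_order all_algebra.
From mathcomp Require Import lra.
Set Implicit Arguments. Unset Strict Implicit. Unset Printing Implicit Defensive.
Import Order.TTheory GRing.Theory Num.Theory.
Local Open Scope ring_scope.

(* The k-th largest value t of f is characterised by two counts: at least k
   points have f >= t and fewer than k have f > t.  Hence taking the k-th
   largest value commutes with increasing maps, and a pointwise bound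
   f <= g + c passes to the k-th largest values.  Applied to
   |n F_R - I| <= eps n / 4 in both directions, this gives
   |n F_R^k - I^k| <= eps n / 4, and both claims follow by adding the bound
   at u. *)

Section KthLargest.
Variable R : realFieldType.
Local Notation geR := (fun a b : R => b <= a).

Let geR_total : total geR.
Proof. by move=> a b; exact: le_total. Qed.

Lemma sorted_ge_count_ge_nth (s : seq R) i : (i < size s)%N -> sorted geR s ->
  (i < count (fun y => (nth 0 s i <= y)%R) s)%N.
Proof.
move=> lt_i_s s_sorted; set P := (X in count X); rewrite -(cat_take_drop i.+1 s) count_cat.
suff -> : count P (take i.+1 s) = i.+1 by rewrite leq_addr.
have all_P : all P (take i.+1 s).
  apply/(all_nthP 0) => j; rewrite size_takel // => lt_j_i.
  rewrite nth_take //; apply: (sorted_leq_nth ge_trans lexx) => //.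
  by rewrite inE (leq_trans lt_j_i).
by apply/eqP; rewrite -[X in _ == X](size_takel lt_i_s) -all_count.
Qed.

Lemma sorted_ge_count_gt_nth (s : seq R) i : (i < size s)%N -> sorted geR s ->
  (count (fun y => (nth 0 s i < y)%R) s <= i)%N.
Proof.
move=> lt_i_s s_sorted; set P := (X in count X); rewrite -(cat_take_drop i s) count_cat.
suff -> : count P (drop i s) = 0%N.
  by rewrite addn0 (leq_trans (count_size _ _)) // size_take_min geq_minl.
apply/eqP; rewrite -leqn0 leqNgt -has_count; apply/negP => /(has_nthP 0)[j].
rewrite size_drop nth_drop /P ltNge => lt_j_s /negP; apply.
by apply: (sorted_leq_nth ge_trans lexx); rewrite ?inE -?ltn_subRL ?leq_addr.
Qed.

Variables (V : finType) (k : nat).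
Hypotheses (k_gt0 : (0 < k)%N) (k_le_card : (k <= #|V|)%N).

Lemma count_sort_map_enum (f : V -> R) (P : pred R) :
  count P (sort geR (map f (enum V))) = #|[pred x | P (f x)]|.
Proof. by rewrite count_sort count_map enumT cardE /enum_mem size_filter. Qed.

Lemma kth_largest_card_ge (f : V -> R) :
  (k <= #|[pred x | (kth_largest f k <= f x)%R]|)%N.
Proof.
rewrite -count_sort_map_enum /kth_largest -[X in (X <= _)%N](prednK k_gt0).
apply: sorted_ge_count_ge_nth; last exact/sort_sorted/geR_total.
by rewrite size_sort size_map -cardT prednK.
Qed.

Lemma kth_largest_card_gt (f : V -> R) :
  (#|[pred x | (kth_largest f k < f x)%R]| < k)%N.
Proof.
rewrite -count_sort_map_enum /kth_largest -[X in (_ < X)%N](prednK k_gt0) ltnS.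
apply: sorted_ge_count_gt_nth; last exact/sort_sorted/geR_total.
by rewrite size_sort size_map -cardT prednK.
Qed.

Lemma kth_largest_unique (f : V -> R) t :
  (k <= #|[pred x | (t <= f x)%R]|)%N -> (#|[pred x | (t < f x)%R]| < k)%N ->
  kth_largest f k = t.
Proof.
move=> card_ge card_gt; apply/eqP; rewrite eq_le !leNgt; apply/andP; split.
- apply/negP => lt_t_kth; have := kth_largest_card_ge f.
  rewrite leqNgt (leq_ltn_trans _ card_gt) //; apply/subset_leq_card/subsetP.
  by move=> x; rewrite !inE => /(lt_le_trans lt_t_kth).
- apply/negP => lt_kth_t; have := kth_largest_card_gt f.
  rewrite ltnNge (leq_trans card_ge) //; apply/subset_leq_card/subsetP.
  by move=> x; rewrite !inE => /(lt_le_trans lt_kth_t).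
Qed.

Lemma kth_largest_comp (f : V -> R) (phi : R -> R) :
  {mono phi : a b / a <= b} -> kth_largest (fun x => phi (f x)) k = phi (kth_largest f k).
Proof.
move=> phi_mono; have phi_smono := leW_mono phi_mono.
apply: kth_largest_unique.
- rewrite (leq_trans (kth_largest_card_ge f)) //; apply/subset_leq_card/subsetP.
  by move=> x; rewrite !inE /= phi_mono.
- rewrite (leq_ltn_trans _ (kth_largest_card_gt f)) //; apply/subset_leq_card/subsetP.
  by move=> x; rewrite !inE /= phi_smono.
Qed.

Lemma kth_largest_le (f g : V -> R) c :
  (forall x, f x <= g x + c) -> kth_largest f k <= kth_largest g k + c.
Proof.
move=> le_fg; rewrite leNgt; apply/negP => lt_g_f.
have := kth_largest_card_gt g; rewrite ltnNge (leq_trans (kth_largest_card_ge f)) //.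
apply/subset_leq_card/subsetP => x; rewrite !inE => le_kth_fx.
by have := le_fg x; lra.
Qed.

End KthLargest.

Theorem lemma6p1 (R : realFieldType) (V : finType) (m : diffusion_model)
  (w : V -> V -> R) (eps : R) (k : nat) (Rs : seq {set V}) :
  valid_weights m w ->
  0 < eps -> (1 <= k)%N -> (k <= #|V|)%N ->
  (forall u : V,
     `| #|V|%:R * frac_cover Rs u - influence m w u | <= eps * #|V|%:R / 4) ->
  forall u : V,
    (influence m w u >= kth_largest (influence m w) k ->
       #|V|%:R * frac_cover Rs u >=
       #|V|%:R * kth_largest (frac_cover Rs) k - eps * #|V|%:R / 2) /\
    (influence m w u <= kth_largest (influence m w) k - eps * #|V|%:R ->
       #|V|%:R * frac_cover Rs u <=
       #|V|%:R * kth_largest (frac_cover Rs) k - eps * #|V|%:R / 2).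
Proof.
move=> _ _ k_gt0 k_le_card close u.
have n_gt0 : 0 < #|V|%:R :> R by rewrite ltr0n (leq_trans k_gt0).
have close_lo x : influence m w x <= #|V|%:R * frac_cover Rs x + eps * #|V|%:R / 4.
  by have := close x; rewrite ler_norml => /andP[]; lra.
have close_hi x : #|V|%:R * frac_cover Rs x <= influence m w x + eps * #|V|%:R / 4.
  by have := close x; rewrite ler_norml => /andP[]; lra.
have kth_scale := kth_largest_comp k_gt0 k_le_card (frac_cover Rs) (ler_pM2l n_gt0).
have kth_hi := kth_largest_le k_gt0 k_le_card close_hi.
have kth_lo := kth_largest_le k_gt0 k_le_card close_lo.
rewrite kth_scale in kth_hi kth_lo.
by split=> Iu; have := close_lo u; have := close_hi u; lra.
Qed.
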